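(* Every vertex cover TAR graph is unique: for all graphs $G$ and $G'$, if $\mathfrak{C}(G)\cong\mathfrak{C}(G')$ then $G\cong G'$.
   Context: All graphs are finite, simple, undirected, with nonempty vertex set (isolated vertices allowed). A vertex cover of $G$ is a set $S\subseteq V(G)$ containing at least one endpoint of every edge. The vertex cover TAR graph $\mathfrak{C}(G)$ has as vertices the vertex covers of $G$, with $S_1S_2$ an edge iff $|S_1\ominus S_2|=1$ (symmetric difference). *)

From mathcomp Require Import all_boot.
Set Implicit Arguments. Unset Strict Implicit. Unset Printing Implicit Defensive.

Definition simple_graph (T : finType) (e : rel T) : Prop :=
  symmetric e /\ irreflexive e.

Definition graph_iso (A B : Type) (rA : rel A) (rB : rel B) : Prop :=
  exists f : A -> B, bijective f /\ forall x y, rA x y = rB (f x) (f y).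

Definition is_vertex_cover (T : finType) (e : rel T) (S : {set T}) : bool :=
  [forall x, forall y, e x y ==> (x \in S) || (y \in S)].

Definition vcover (T : finType) (e : rel T) :=
  {S : {set T} | is_vertex_cover e S}.

Definition symdiff (T : finType) (A B : {set T}) : {set T} :=
  (A :\: B) :|: (B :\: A).

Definition tar_adj {T : finType} (e : rel T) : rel (vcover e) :=
  fun S1 S2 => #|symdiff (val S1) (val S2)| == 1.

From mathcomp Require Import all_boot.
Set Implicit Arguments. Unset Strict Implicit. Unset Printing Implicit Defensive.

(* The covers S for which every S △ {u} is again a cover are exactly the
   vertices of maximal degree |V| in the TAR graph, and the full vertex set is
   one of them.  An isomorphism of TAR graphs preserves degrees, so it forces
   |V| = |V'| and maps V to such a cover S' of G'.  For such an S the
   neighbours of S are the S △ {u}, so the isomorphism induces a bijection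
   V -> V'; and since all edges of G then lie inside S, two distinct vertices
   u, v are adjacent in G iff S △ {u} and S △ {v} have no common neighbour
   besides S (the only candidate is S △ {u, v}). *)

Definition degree (A : finType) (r : rel A) (x : A) : nat := #|[set y | r x y]|.

Definition common_neighbour_besides (A : finType) (r : rel A) (x a b : A) :=
  [exists y, [&& y != x, r a y & r b y]].

Lemma graph_iso_sym (A B : Type) (rA : rel A) (rB : rel B) :
  graph_iso rA rB -> graph_iso rB rA.
Proof.
case=> f [[g fK gK] hf]; exists g; split; first by exists f.
by move=> x y; rewrite hf !gK.
Qed.

Section RelIso.

Variables (A B : finType) (rA : rel A) (rB : rel B) (f : A -> B).
Hypotheses (f_bij : bijective f) (f_hom : forall x y, rA x y = rB (f x) (f y)).

Lemma degree_iso x : degree rB (f x) = degree rA x.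
Proof.
have [g fK gK] := f_bij; rewrite /degree.
have -> : [set y | rB (f x) y] = f @: [set y | rA x y].
  apply/setP => y; rewrite inE; apply/idP/imsetP => [hy | [z hz ->]].
    by exists (g y); rewrite ?gK // inE f_hom gK.
  by move: hz; rewrite inE f_hom.
exact: card_imset (bij_inj f_bij).
Qed.

Lemma common_neighbour_besides_iso x a b :
  common_neighbour_besides rB (f x) (f a) (f b) =
  common_neighbour_besides rA x a b.
Proof.
have [g fK gK] := f_bij.
apply/existsP/existsP => [[y hy] | [y hy]]; last first.
  by exists (f y); rewrite (bij_eq f_bij) -!f_hom.
by exists (g y); move: hy; rewrite -[y]gK (bij_eq f_bij) -!f_hom gK.
Qed.

End RelIso.

Lemma in_symdiff (T : finType) (A B : {set T}) y :
  (y \in symdiff A B) = (y \in A) (+) (y \in B).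
Proof. by rewrite !inE; case: (y \in A); case: (y \in B). Qed.

Lemma symdiffK (T : finType) (A B : {set T}) : symdiff A (symdiff A B) = B.
Proof. by apply/setP => y; rewrite !in_symdiff addKb. Qed.

Lemma symdiffKr (T : finType) (A B : {set T}) : symdiff (symdiff A B) B = A.
Proof. by apply/setP => y; rewrite !in_symdiff addbK. Qed.

Lemma symdiff_cancel (T : finType) (A B C : {set T}) :
  symdiff (symdiff A B) (symdiff A C) = symdiff B C.
Proof.
apply/setP => y; rewrite !in_symdiff.
by case: (y \in A); case: (y \in B); case: (y \in C).
Qed.

Lemma symdiff_set1_set2 (T : finType) (u v : T) :
  u != v -> symdiff [set u] [set u; v] = [set v].
Proof.
move=> uv; apply/setP => y; rewrite in_symdiff !inE.
by case: eqVneq => [->|_] //=; rewrite (negbTE uv).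
Qed.

Lemma vertex_coverP (T : finType) (e : rel T) (S : {set T}) :
  reflect (forall x y, e x y -> (x \in S) || (y \in S)) (is_vertex_cover e S).
Proof.
apply: (iffP forallP) => [H x y exy | H x].
  by move: (H x) => /forallP/(_ y)/implyP; apply.
by apply/forallP => y; apply/implyP; apply: H.
Qed.

Section Toggles.

Variables (T : finType) (e : rel T).

Definition toggle (S : vcover e) (u : T) : vcover e :=
  insubd S (symdiff (val S) [set u]).

Definition toggle_closed (S : vcover e) : Prop :=
  forall u, is_vertex_cover e (symdiff (val S) [set u]).

Lemma val_toggle S u :
  is_vertex_cover e (symdiff (val S) [set u]) ->
  val (toggle S u) = symdiff (val S) [set u].
Proof. exact: insubdK. Qed.

Lemma tar_adj_toggle S u :
  is_vertex_cover e (symdiff (val S) [set u]) -> tar_adj S (toggle S u).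
Proof. by move=> hu; rewrite /tar_adj val_toggle // symdiffK cards1. Qed.

Lemma toggle_inj S u v :
  is_vertex_cover e (symdiff (val S) [set u]) ->
  is_vertex_cover e (symdiff (val S) [set v]) -> toggle S u = toggle S v -> u = v.
Proof.
move=> hu hv /(congr1 val); rewrite !val_toggle // => /(congr1 (symdiff (val S))).
by rewrite !symdiffK; apply: set1_inj.
Qed.

Lemma tar_adjP S w :
  tar_adj S w -> exists2 t, is_vertex_cover e (symdiff (val S) [set t]) &
                            w = toggle S t.
Proof.
case/cards1P => t ht.
have hw : val w = symdiff (val S) [set t] by rewrite -ht symdiffK.
have ht' : is_vertex_cover e (symdiff (val S) [set t]).
  by rewrite -hw; apply: valP.
by exists t => //; apply: val_inj; rewrite val_toggle.
Qed.

(* [x0] is a junk value, used only when [w] is not adjacent to [S]. *)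
Definition toggled_vertex (x0 : T) (S w : vcover e) : T :=
  odflt x0 [pick t in symdiff (val S) (val w)].

Lemma toggle_toggled_vertex x0 S w :
  tar_adj S w -> w = toggle S (toggled_vertex x0 S w).
Proof.
case/tar_adjP => t ht ->; congr toggle.
rewrite /toggled_vertex val_toggle // symdiffK.
by case: pickP => [z|/(_ t)]; rewrite !inE ?eqxx // => /eqP.
Qed.

Lemma tar_degreeE S :
  degree (@tar_adj _ e) S =
  #|[set u | is_vertex_cover e (symdiff (val S) [set u])]|.
Proof.
rewrite /degree; set D := [set u : T | _].
have -> : [set w | tar_adj S w] = toggle S @: D.
  apply/setP => w; rewrite inE; apply/idP/imsetP.
    by case/tar_adjP => t ht ->; exists t; rewrite ?inE.
  by case=> u; rewrite inE => hu ->; apply: tar_adj_toggle.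
by rewrite card_in_imset // => u v; rewrite !inE; apply: toggle_inj.
Qed.

Lemma tar_degree_le S : degree (@tar_adj _ e) S <= #|T|.
Proof. by rewrite tar_degreeE max_card. Qed.

Lemma toggle_closed_degree S : degree (@tar_adj _ e) S = #|T| -> toggle_closed S.
Proof.
rewrite tar_degreeE => hD u.
have : [set u | is_vertex_cover e (symdiff (val S) [set u])] = setT.
  by apply/eqP; rewrite eqEcard subsetT cardsT hD /=.
by move/setP/(_ u); rewrite !inE.
Qed.

Lemma cover_setT : is_vertex_cover e setT.
Proof. by apply/vertex_coverP => x y _; rewrite inE. Qed.

Definition full_cover : vcover e := exist _ setT cover_setT.

Hypothesis hG : simple_graph e.

Lemma toggle_closed_full_cover : toggle_closed full_cover.
Proof.
case: hG => _ e_irr u; apply/vertex_coverP => x y exy; rewrite !in_symdiff !inE.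
by case: eqVneq exy => [-> /=|//]; case: eqVneq => [->|//]; rewrite e_irr.
Qed.

Lemma tar_degree_full_cover : degree (@tar_adj _ e) full_cover = #|T|.
Proof.
rewrite tar_degreeE -cardsT; apply: eq_card => u.
by rewrite !inE toggle_closed_full_cover.
Qed.

Section ToggleClosed.

Variable S : vcover e.
Hypothesis hS : toggle_closed S.

(* If [y] covered the edge alone, removing [y] would uncover it. *)
Lemma toggle_closed_edge x y : e x y -> x \in val S.
Proof.
have [_ e_irr] := hG; move=> exy; have /vertex_coverP/(_ x y exy) := valP S.
case/orP=> [//|yS]; have /vertex_coverP/(_ x y exy) := hS y.
rewrite !in_symdiff !inE eqxx yS addbT orbF; case: eqVneq exy => [->|_ _].
  by rewrite e_irr.
by rewrite addbF.
Qed.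

Lemma toggle_neighbour_notin a w :
  a \in val S -> tar_adj (toggle S a) w -> w != S -> a \notin val w.
Proof.
move=> aS /tar_adjP [t ht ->]; apply: contra => aw; apply/eqP/val_inj.
move: aw; rewrite (val_toggle ht) (val_toggle (hS a)) in_symdiff.
by rewrite in_symdiff !inE eqxx aS /= => /eqP <-; apply: symdiffKr.
Qed.

Lemma cover_toggle_nonedge u v :
  ~~ e u v -> is_vertex_cover e (symdiff (val S) [set u; v]).
Proof.
have [e_sym e_irr] := hG; move=> nuv; apply/vertex_coverP => x y exy.
have eyx : e y x by rewrite e_sym.
rewrite !in_symdiff (toggle_closed_edge exy) (toggle_closed_edge eyx) !inE /=.
rewrite -negb_and; apply: contraNN nuv.
case/andP => /orP[]/eqP xe /orP[]/eqP ye; subst x y; by rewrite ?e_irr in exy.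
Qed.

Lemma toggle_closed_adj u v : u != v ->
  e u v = ~~ common_neighbour_besides (@tar_adj _ e) S (toggle S u) (toggle S v).
Proof.
move=> uv; apply/idP/idP => [euv | ].
  apply/existsP => -[w /and3P [wS au av]].
  have /vertex_coverP/(_ u v euv) := valP w.
  rewrite (negbTE (toggle_neighbour_notin (toggle_closed_edge euv) au wS)).
  have [e_sym _] := hG; rewrite e_sym in euv.
  by rewrite (negbTE (toggle_neighbour_notin (toggle_closed_edge euv) av wS)).
apply: contraR => /cover_toggle_nonedge huv; apply/existsP.
set w : vcover e := exist (is_vertex_cover e) _ huv.
have val_w : val w = symdiff (val S) [set u; v] by [].
exists w; rewrite /tar_adj (val_toggle (hS u)) (val_toggle (hS v)) val_w.
rewrite !symdiff_cancel symdiff_set1_set2 // setUC symdiff_set1_set2 1?eq_sym //.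
rewrite !cards1 !eqxx !andbT; apply/eqP => /(congr1 val) /setP /(_ u).
by rewrite val_w !in_symdiff !inE eqxx addbT; case: (u \in val S).
Qed.

End ToggleClosed.

End Toggles.

Lemma card_le_of_tar_iso (T T' : finType) (e : rel T) (e' : rel T') :
  simple_graph e -> graph_iso (@tar_adj _ e) (@tar_adj _ e') -> #|T| <= #|T'|.
Proof.
move=> hG [phi [phi_bij phi_hom]]; have := tar_degree_le (phi (full_cover e)).
by rewrite (degree_iso phi_bij phi_hom) tar_degree_full_cover.
Qed.

Theorem proposition6p6 (T T' : finType) (e : rel T) (e' : rel T')
  (hG : simple_graph e) (hG' : simple_graph e')
  (hT : 0 < #|T|) (hT' : 0 < #|T'|) :
  graph_iso (@tar_adj T e) (@tar_adj T' e') -> graph_iso e e'.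
Proof.
move=> iso; have le_TT' := card_le_of_tar_iso hG iso.
have le_T'T := card_le_of_tar_iso hG' (graph_iso_sym iso).
case: iso => phi [phi_bij phi_hom]; case/card_gt0P: hT' => x0 _.
set S := full_cover e; set S' := phi S.
have hS := toggle_closed_full_cover hG.
have hS' : toggle_closed S'.
  apply: toggle_closed_degree.
  rewrite (degree_iso phi_bij phi_hom) tar_degree_full_cover //.
  by apply/eqP; rewrite eqn_leq le_TT' le_T'T.
pose f u := toggled_vertex x0 S' (phi (toggle S u)).
have phi_toggle u : phi (toggle S u) = toggle S' (f u).
  by apply: toggle_toggled_vertex; rewrite -phi_hom tar_adj_toggle.
have f_inj : injective f.
  move=> u v fuv; apply: (toggle_inj (hS u) (hS v)).
  by apply: (bij_inj phi_bij); rewrite !phi_toggle fuv.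
exists f; split; first exact: inj_card_bij f_inj le_T'T.
move=> u v; case: (eqVneq u v) => [<-|uv].
  by case: hG => _ ->; case: hG' => _ ->.
rewrite (toggle_closed_adj hG hS uv) (toggle_closed_adj hG' hS') ?inj_eq //.
by rewrite -!phi_toggle (common_neighbour_besides_iso phi_bij phi_hom).
Qed.
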